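(* Let $q\geqslant 9$ be a prime power. Then the $q$-ary Hamming code $\mathcal{H}_{2,q}$ (a $[q+1,q-1,3]_q$ MDS code) is log-concave.
   Context: The $q$-ary Hamming code $\mathcal{H}_{m,q}$ is the $\mathbb{F}_q$-linear code of length $n=(q^m-1)/(q-1)$ whose parity-check matrix has as columns one nonzero representative of each $1$-dimensional subspace of $\mathbb{F}_q^m$ (equivalently, the dual of the $q$-ary simplex code). For a linear code of length $n$, $A_i$ is the number of codewords of weight $i$; the nonzero weight distribution is the subsequence $a_0,\dots,a_N$ of $A_0,\dots,A_n$ of its nonzero values, in order; the code is log-concave if $a_i^2\geqslant a_{i-1}a_{i+1}$ for all $1\leqslant i\leqslant N-1$. *)

From HB Require Import structures.
From mathcomp Require Import all_boot all_order all_algebra all_field.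
Set Implicit Arguments. Unset Strict Implicit. Unset Printing Implicit Defensive.
Import GRing.Theory.
Local Open Scope ring_scope.

Definition hamming_pcm (F : finFieldType) (m n : nat) (H : 'M[F]_(m, n)) : Prop :=
  (forall j : 'I_n, col j H != 0) /\
  (forall v : 'cV[F]_m, v != 0 -> exists! j : 'I_n, exists a : F, col j H = a *: v).

Definition wt (F : finFieldType) (n : nat) (c : 'rV[F]_n) : nat :=
  #|[set j : 'I_n | c 0 j != 0]|.

Definition in_code (F : finFieldType) (m n : nat) (H : 'M[F]_(m, n)) (c : 'rV[F]_n) : bool :=
  H *m c^T == 0.

Definition wdist (F : finFieldType) (m n : nat) (H : 'M[F]_(m, n)) (i : nat) : nat :=
  #|[set c : 'rV[F]_n | in_code H c && (wt c == i)%N]|.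

Definition nz_wdist (F : finFieldType) (m n : nat) (H : 'M[F]_(m, n)) : seq nat :=
  [seq x <- [seq wdist H i | i <- iota 0 n.+1] | x != 0%N].

Definition log_concave_seq (a : seq nat) : Prop :=
  forall i : nat, (1 <= i)%N -> (i.+1 < size a)%N ->
    (nth 0%N a i.-1 * nth 0%N a i.+1 <= nth 0%N a i ^ 2)%N.

Definition code_log_concave (F : finFieldType) (m n : nat) (H : 'M[F]_(m, n)) : Prop :=
  log_concave_seq (nz_wdist H).

(* The columns of a parity-check matrix of H_{2,q} are pairwise linearly independent
   (det2 of any two of them is nonzero).  Removing one coordinate from a support S gives a
   recursion for the number of words with support S and a prescribed syndrome; solving it
   yields the MDS weight distribution q^2 A_w = C(n,w) wpoly q w, so the nonzero weight
   distribution is 1, A_3, ..., A_{q+1}.  Cancelling the binomial coefficients, the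
   inequality A_m A_{m+2} <= A_{m+1}^2 becomes
     (m+1)(q-m) wpoly(m) wpoly(m+2) <= (q+1-m)(m+2) wpoly(m+1)^2,
   where wpoly(m+1)^2 - wpoly(m) wpoly(m+2) = (-1)^m (q-1)^(m+1) wgap + (q-1)^2 q^2.  For even m
   this is immediate.  For odd m the negative term is absorbed by the slack (q+2) wpoly(m+1)^2
   once (q-1)^m dominates 8 (m+1)^2 q^2, which holds for m >= 5; the case m = 3 is a
   polynomial inequality in q, true for q >= 9. *)

From mathcomp Require Import all_boot all_order all_algebra all_field.
From mathcomp Require Import ring lra zify.
Set Implicit Arguments. Unset Strict Implicit. Unset Printing Implicit Defensive.
Import Order.TTheory GRing.Theory Num.Theory.
Local Open Scope ring_scope.

Lemma mul_bin_sqr n m :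
  ('C(n, m) * 'C(n, m.+2) * ((n - m) * m.+2) = 'C(n, m.+1) ^ 2 * (m.+1 * (n - m.+1)))%N.
Proof.
transitivity (((n - m) * 'C(n, m)) * (m.+2 * 'C(n, m.+2)))%N; first by ring.
by rewrite -mul_bin_left [(m.+2 * _)%N]mul_bin_left; ring.
Qed.

Lemma bin4_le_sqr n : ('C(n, 4) <= 'C(n, 3) ^ 2)%N.
Proof.
have := mul_bin_left n 3; have := mul_bin_left n 2; have := mul_bin_left n 1.
rewrite bin1; nia.
Qed.

Section TwoByTwo.
Variable F : fieldType.
Implicit Types (u v r g : 'cV[F]_2) (a : F).

Definition det2 u v : F := u 0 0 * v 1 0 - u 1 0 * v 0 0.

Lemma det2N u v : det2 v u = - det2 u v.
Proof. by rewrite /det2; ring. Qed.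

Lemma det2BZl r u g a : det2 (r - a *: u) g = det2 r g - a * det2 u g.
Proof. by rewrite /det2 !mxE; ring. Qed.

Lemma det2Zl u v a : det2 (a *: u) v = a * det2 u v.
Proof. by rewrite /det2 !mxE; ring. Qed.

Lemma det2_0l v : det2 0 v = 0.
Proof. by rewrite /det2 !mxE; ring. Qed.

Lemma det2_id u : det2 u u = 0.
Proof. by rewrite /det2; ring. Qed.

Lemma cV2_eq u v : u 0 0 = v 0 0 -> u 1 0 = v 1 0 -> u = v.
Proof.
move=> e0 e1; apply/matrixP => i j; rewrite (ord1 j).
by case: i => [[|[|//]] ?]; [move: e0 | move: e1]; congr (_ = _); congr (_ _ _); apply: val_inj.
Qed.

Lemma det2_eq0_scale u v : u != 0 -> det2 u v = 0 -> exists l, v = l *: u.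
Proof.
rewrite /det2 => u_nz /eqP; rewrite subr_eq0 => /eqP d0.
have [u0|u0] := eqVneq (u 0 0) 0.
  have u1 : u 1 0 != 0.
    by apply: contraNneq u_nz => u1; apply/eqP/cV2_eq; rewrite !mxE.
  exists (v 1 0 / u 1 0); apply: cV2_eq; rewrite !mxE ?divfK //.
  move: d0; rewrite u0 mul0r => /esym/eqP; rewrite mulf_eq0 (negbTE u1) /=.
  by move=> /eqP ->; rewrite mulr0.
exists (v 0 0 / u 0 0); apply: cV2_eq; rewrite !mxE ?divfK //.
by apply: (mulfI u0); rewrite d0; field.
Qed.

End TwoByTwo.

Section LineCount.
Variable F : finFieldType.
Implicit Types (u r g : 'cV[F]_2) (a : F).

Lemma sum_nz_eq a0 : \sum_(a | a != 0) ((a == a0)%:R : int) = (a0 != 0)%:R.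
Proof.
have [->|a0_nz] := eqVneq a0 0; first by rewrite big1 // => a /negbTE ->.
by rewrite (bigD1 a0) //= eqxx big1 ?addr0 // => a /andP[_ /negbTE ->].
Qed.

Lemma sum_nz_det2_shift_eq0 r u g : det2 u g != 0 ->
  \sum_(a | a != 0) ((det2 (r - a *: u) g == 0)%:R : int) = (det2 r g != 0)%:R.
Proof.
move=> ug_nz.
have -> : (det2 r g != 0) = (det2 r g / det2 u g != 0).
  by rewrite mulf_eq0 invr_eq0 (negbTE ug_nz) orbF.
rewrite -sum_nz_eq; apply: eq_bigr => a _.
by rewrite det2BZl subr_eq0 eq_sym (can2_eq (mulfK ug_nz) (divfK ug_nz)).
Qed.

Lemma sum_nz_shift_eq0 r u : u != 0 ->
  \sum_(a | a != 0) ((r - a *: u == 0)%:R : int) = (det2 r u == 0)%:R - (r == 0)%:R.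
Proof.
move=> u_nz; have [ru0|ru_nz] := eqVneq (det2 r u) 0.
  have [l ->] : exists l, r = l *: u by apply: det2_eq0_scale; rewrite // det2N ru0 oppr0.
  under eq_bigr => a _ do rewrite -scalerBl scaler_eq0 (negbTE u_nz) orbF subr_eq0 eq_sym.
  by rewrite sum_nz_eq scaler_eq0 (negbTE u_nz) orbF; case: eqP.
have r_nz : r != 0 by apply: contraNneq ru_nz => ->; rewrite det2_0l.
rewrite big1 ?(negbTE r_nz) ?subrr // => a _.
apply/eqP; rewrite pnatr_eq0 eqb0; apply: contra ru_nz; rewrite subr_eq0 => /eqP ->.
by rewrite det2Zl det2_id mulr0.
Qed.

End LineCount.

Definition wpoly (q : int) (w : nat) : int :=
  (q - 1) ^+ w + (-1) ^+ w * ((q - 1) * (q + 1 - w%:R * q)).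

Section SupportCount.
Variables (F : finFieldType) (n : nat) (H : 'M[F]_(2, n)).
Implicit Types (S : {set 'I_n}) (k : 'I_n) (r : 'cV[F]_2) (c : 'rV[F]_n).
Local Notation q := (#|F|%:R : int).

Definition supp (c : 'rV[F]_n) : {set 'I_n} := [set j | c 0 j != 0].

Definition nwords (S : {set 'I_n}) (r : 'cV[F]_2) : nat :=
  #|[set c | (supp c == S) && (H *m c^T == r)]|.

Definition nparallel (S : {set 'I_n}) (r : 'cV[F]_2) : nat :=
  #|[set i in S | det2 r (col i H) == 0]|.

Lemma supp_eq0 c : (supp c == set0) = (c == 0).
Proof.
apply/eqP/eqP => [S0|->]; last by apply/setP => j; rewrite !inE mxE eqxx.
apply/rowP => j; rewrite mxE.
have : j \notin supp c by rewrite S0 inE.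
by rewrite inE negbK => /eqP.
Qed.

Lemma nwords_set0 r : nwords set0 r = (r == 0).
Proof.
rewrite /nwords; case: (eqVneq r 0) => [->|r_nz].
  apply/eqP/cards1P; exists 0; apply/setP => c.
  by rewrite !inE supp_eq0; case: eqP => [->|//]; rewrite trmx0 mulmx0 eqxx.
apply/eqP; rewrite cards_eq0; apply/eqP/setP => c; rewrite !inE supp_eq0.
by case: eqP => [->|//]; rewrite trmx0 mulmx0 eq_sym (negbTE r_nz).
Qed.

Lemma mul_col_delta k : H *m (delta_mx 0 k)^T = col k H.
Proof. by rewrite trmx_delta colE. Qed.

Lemma nwords_setU1 S k r : k \notin S ->
  nwords (k |: S) r = (\sum_(a : F | a != 0%R) nwords S (r - a *: col k H))%N.
Proof.
move=> kS; rewrite /nwords -sum1_card.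
rewrite (partition_big (fun c => c 0 k) (fun a => a != 0)); last first.
  move=> c; rewrite inE => /andP[/eqP Sc _].
  have : k \in supp c by rewrite Sc setU11.
  by rewrite inE.
apply: eq_bigr => a a_nz; rewrite -sum1_card (reindex_inj (addIr (a *: delta_mx 0 k))).
apply: eq_bigl => c; rewrite !inE.
have ek j : (a *: delta_mx 0 k) 0 j = if j == k then a else 0.
  by rewrite !mxE eqxx mulr_natr; case: (j == k).
rewrite linearD linearZ /= mulmxDr -scalemxAr mul_col_delta mxE ek eqxx.
rewrite !(can2_eq (addrK _) (subrK _)) subrr.
have [ck|ck] := eqVneq (c 0 k) 0; last first.
  rewrite andbF; apply/esym/negbTE; apply: contraNN kS => /andP[/eqP <- _].
  by rewrite inE.
rewrite andbT; congr (_ && _).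
have kc : k \notin supp c by rewrite inE ck eqxx.
have -> : supp (c + a *: delta_mx 0 k) = k |: supp c.
  apply/setP => j; rewrite !inE mxE ek.
  by case: (eqVneq j k) => [->|_]; rewrite ?ck ?add0r ?a_nz ?addr0.
by apply/eqP/eqP => [E|->//]; rewrite -(setU1K kc) E setU1K.
Qed.

Lemma wdist_sum_nwords w :
  wdist H w = (\sum_(S : {set 'I_n} | #|S| == w) nwords S 0)%N.
Proof.
rewrite /wdist -sum1_card (partition_big supp (fun S => #|S| == w)) => [|c]; last first.
  by rewrite inE => /andP[].
apply: eq_bigr => S /eqP cardS; rewrite /nwords -sum1_card; apply: eq_bigl => c.
rewrite !inE /in_code andbC; case: eqP => [Sc|] //=.
by rewrite /wt -/(supp c) Sc cardS eqxx andbT.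
Qed.

Lemma nparallel_0 S : nparallel S 0 = #|S|.
Proof. by apply: eq_card => i; rewrite !inE det2_0l eqxx andbT. Qed.

Lemma nparallel_sum S r :
  (nparallel S r)%:R = \sum_(i in S) ((det2 r (col i H) == 0)%:R : int).
Proof.
rewrite /nparallel -sum1_card natr_sum big_mkcond [RHS]big_mkcond /=.
by apply: eq_bigr => i _; rewrite inE; case: (i \in S); case: (_ == 0).
Qed.

Lemma nparallel_setU1 S k r : k \notin S ->
  ((nparallel (k |: S) r)%:R : int) = (det2 r (col k H) == 0)%:R + (nparallel S r)%:R.
Proof. by move=> kS; rewrite !nparallel_sum big_setU1. Qed.

Hypothesis col_indep : forall i j, i != j -> det2 (col i H) (col j H) != 0.

Lemma sum_nz_nparallel_shift S k r : k \notin S ->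
  \sum_(a : F | a != 0 :> F) ((nparallel S (r - a *: col k H))%:R : int)
    = #|S|%:R - (nparallel S r)%:R.
Proof.
move=> kS; under eq_bigr => a _ do rewrite nparallel_sum.
rewrite exchange_big /= nparallel_sum -sum1_card natr_sum -sumrB.
apply: eq_bigr => j jS; rewrite sum_nz_det2_shift_eq0; first by case: (_ == 0).
by apply: col_indep; apply: contraNneq kS => ->.
Qed.

Lemma card_nz : #|(fun a : F => a != 0)|%:R = q - 1.
Proof.
have -> : #|(fun a : F => a != 0)| = #|F|.-1 by rewrite -(cardC1 0); apply: eq_card.
have F_gt0 : (0 < #|F|)%N by apply/card_gt0P; exists 0.
by rewrite -[in RHS](prednK F_gt0) -natr1 addrK.
Qed.

Hypothesis col_nz : forall j, col j H != 0.

Lemma nwords_formula S r :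
  q ^+ 2 * (nwords S r)%:R = (q - 1) ^+ #|S|
    + (-1) ^+ #|S| * (#|S|%:R * q - 1 + q ^+ 2 * ((r == 0)%:R - (nparallel S r)%:R)).
Proof.
move Ew: #|S| => w; elim: w S Ew r => [|w IH] S Ew r.
  move/eqP: Ew; rewrite cards_eq0 => /eqP ->.
  by rewrite nwords_set0 nparallel_sum big_set0; ring.
have [k kS] : exists k, k \in S by apply/set0Pn; rewrite -card_gt0 Ew.
have kS' : k \notin S :\ k by rewrite !inE eqxx.
have cardS' : #|S :\ k| = w by move: Ew; rewrite (cardsD1 k S) kS add1n => -[].
rewrite -(setD1K kS) nwords_setU1 // natr_sum mulr_sumr nparallel_setU1 //.
set u := col k H.
rewrite (eq_bigr (fun a => (q - 1) ^+ w + (-1) ^+ w * (w%:R * q - 1) + (-1) ^+ w * q ^+ 2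
   * ((r - a *: u == 0)%:R - (nparallel (S :\ k) (r - a *: u))%:R))); last first.
  by move=> a _; rewrite IH //; ring.
rewrite {}/u big_split /= sumr_const -mulr_sumr sumrB sum_nz_shift_eq0 // sum_nz_nparallel_shift //.
rewrite -[_ *+ #|_|]mulr_natr card_nz cardS' -natr1 !exprSr; ring.
Qed.

Lemma wdist_formula w : q ^+ 2 * (wdist H w)%:R = 'C(n, w)%:R * wpoly q w.
Proof.
rewrite wdist_sum_nwords natr_sum mulr_sumr.
rewrite (eq_bigr (fun _ => wpoly q w)) => [|S /eqP cardS]; last first.
  by rewrite nwords_formula nparallel_0 cardS eqxx /= /wpoly; ring.
rewrite sumr_const -[_ *+ #|_|]mulr_natl -[n in 'C(n, w)]card_ord -card_draws.
by congr (_%:R * _); apply: eq_card => S; rewrite inE.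
Qed.

End SupportCount.

Lemma hamming_pcm_det2 (F : finFieldType) (n : nat) (H : 'M[F]_(2, n)) :
  hamming_pcm H -> forall i j, i != j -> det2 (col i H) (col j H) != 0.
Proof.
case=> col_nz col_line i j ij; apply/eqP => d0; move/eqP: ij; apply.
have [l col_j] := det2_eq0_scale (col_nz i) d0.
have [j0 [_ col_j0]] := col_line _ (col_nz i).
by rewrite -(col_j0 i) ?(col_j0 j) //; [exists l | exists 1; rewrite scale1r].
Qed.

Lemma hamming_pcm_wdist (F : finFieldType) (n : nat) (H : 'M[F]_(2, n)) : hamming_pcm H ->
  forall w, #|F|%:R ^+ 2 * (wdist H w)%:R = 'C(n, w)%:R * wpoly #|F|%:R w.
Proof. by move=> pcm; apply: wdist_formula (hamming_pcm_det2 pcm) pcm.1. Qed.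

Lemma expr_ge_lin (p : int) (m : nat) : 3 <= p -> (2 <= m)%N -> m%:R * (p + 1) + 1 <= p ^+ m.
Proof.
move=> p3 m2; rewrite -(subnK m2); elim: (m - 2)%N => [|k IH]; first by rewrite expr2; nia.
rewrite addSn exprS -natr1.
have : 0 <= (k + 2)%:R :> int by [].
nia.
Qed.

Lemma wpoly_gt0 (q : int) (w : nat) : 4 <= q -> (3 <= w)%N -> 0 < wpoly q w.
Proof.
case: w => [//|m] q4 m2; rewrite /wpoly -natr1 !exprS -signr_odd.
have p3 : 3 <= q - 1 by lia.
have := expr_ge_lin p3 m2; rewrite subrK.
have : 2 <= m%:R :> int by rewrite (ler_nat _ 2).
move: (m%:R : int) ((q - 1) ^+ m) => k X k2 X_ge.
have : 0 < (q - 1) * (X - k * q + 1) by apply: mulr_gt0; nia.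
by case: (odd m); rewrite ?expr1 ?expr0; nia.
Qed.

Lemma large_power_ineq (q w K a T X : int) : 2 <= q -> 1 <= w ->
  0 <= K <= w * q -> 0 <= a <= w * q -> 0 <= T <= w * q ^+ 3 -> 8 * (w * q) ^+ 2 <= X ->
  K * X * T <= (q + 2) * (q - 1) * (X - a) ^+ 2.
Proof.
move=> q2 w1 /andP[K0 Kle] /andP[a0 ale] /andP[T0 Tle] X_ge.
have wq1 : 1 <= w * q by nia.
have X0 : 0 <= X by nia.
have a_le : 2 * a <= X by nia.
have X_sqr : X ^+ 2 <= 4 * (X - a) ^+ 2 by nia.
have KT : K * T <= w ^+ 2 * q ^+ 4 by nia.
have X_big : 4 * (w ^+ 2 * q ^+ 4) <= (q + 2) * (q - 1) * X by nia.
nia.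
Qed.

Definition wgap (q : int) (m : nat) : int :=
  2 * (q - 1) * (m%:R * q - 1) + ((m%:R + 1) * q - 1) + (q - 1) ^+ 2 * ((m%:R - 1) * q - 1).

Lemma wpoly_sqr_sub (q : int) (m : nat) :
  wpoly q m.+1 ^+ 2 - wpoly q m * wpoly q m.+2
    = (-1) ^+ m * ((q - 1) ^+ m.+1 * wgap q m) + (q - 1) ^+ 2 * q ^+ 2.
Proof.
rewrite /wpoly /wgap -!natr1 !exprS -signr_odd.
by case: (odd m); rewrite ?expr1 ?expr0; ring.
Qed.

Lemma wgap_ge0 (q : int) (m : nat) : 1 <= q -> (2 <= m)%N -> 0 <= wgap q m.
Proof.
move=> q1 m2; have : 2 <= m%:R :> int by rewrite (ler_nat _ 2).
rewrite /wgap; move: (m%:R : int) => k k2.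
have : 0 <= (q - 1) ^+ 2 by apply: sqr_ge0.
nia.
Qed.

Lemma wpoly_odd (q : int) (m : nat) : odd m ->
  wpoly q m.+1 = (q - 1) * ((q - 1) ^+ m - (m%:R * q - 1)).
Proof. by move=> m_odd; rewrite /wpoly -natr1 !exprS -signr_odd m_odd expr1; ring. Qed.

Lemma expr_ge_sqr (p : int) (m : nat) : 8 <= p -> (5 <= m)%N ->
  8 * (m.+1%:R * (p + 1)) ^+ 2 <= p ^+ m.
Proof.
move=> p8 m5; rewrite -(subnK m5); elim: (m - 5)%N => [|k IH].
  have p3 : 512 <= p ^+ 3 by nia.
  have p5 : 512 * p ^+ 2 <= p ^+ 3 * p ^+ 2 by apply: ler_wpM2r; rewrite ?sqr_ge0.
  rewrite add0n (exprD p 3 2); apply: le_trans p5 => /=; nia.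
rewrite addSn [p ^+ _.+1]exprS -[(k + 5).+2%:R]natr1 exprMn.
have : 1 <= (k + 5).+1%:R :> int by rewrite ler1n.
have : 0 <= (p + 1) ^+ 2 by apply: sqr_ge0.
rewrite exprMn in IH; move: ((k + 5).+1%:R : int) ((p + 1) ^+ 2) (p ^+ (k + 5)) IH.
move=> z c Y IH c0 z1.
have z_sqr : (z + 1) ^+ 2 * c <= 8 * z ^+ 2 * c by apply: ler_wpM2r => //; nia.
have zc0 : 0 <= z ^+ 2 * c by rewrite mulr_ge0 ?sqr_ge0.
have : 8 * (z ^+ 2 * c) <= p * (z ^+ 2 * c) by apply: ler_wpM2r.
have : p * (8 * (z ^+ 2 * c)) <= p * Y by apply: ler_wpM2l; lia.
nia.
Qed.

(* After the shift q = t + 9 every coefficient of the difference is nonnegative. *)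
Lemma wpoly_odd_ineq3 (q : int) : 9 <= q ->
  4 * (q - 3) * (q - 1) ^+ 3 * wgap q 3 <= (q + 2) * (q - 1) * ((q - 1) ^+ 3 - (3 * q - 1)) ^+ 2.
Proof.
move=> q9; rewrite /wgap -subr_ge0.
have -> : q = (q - 9) + 9 by ring.
have : 0 <= q - 9 by rewrite subr_ge0.
move: (q - 9) => t t0.
have t_pow k : 0 <= t ^+ k by apply: exprn_ge0.
have := t_pow 2%N; have := t_pow 3%N; have := t_pow 4%N; have := t_pow 5%N.
have := t_pow 6%N; have := t_pow 7%N.
lia.
Qed.

Lemma wgap_le (q : int) (m : nat) : 1 <= q -> (2 <= m)%N -> wgap q m <= m.+1%:R * q ^+ 3.
Proof.
move=> q1 m2; have : 2 <= m%:R :> int by rewrite (ler_nat _ 2).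
rewrite /wgap -[m.+1%:R]natr1; move: (m%:R : int) => k k2.
have -> : (k + 1) * q ^+ 3 = (k + 1) * q * (2 * (q - 1) + 1 + (q - 1) ^+ 2) by ring.
have : 0 <= (q - 1) ^+ 2 by apply: sqr_ge0.
move: ((q - 1) ^+ 2) => s s0; nia.
Qed.

Lemma wpoly_odd_ineq (q : int) (m : nat) : 9 <= q -> odd m -> (3 <= m)%N -> m.+1%:R <= q ->
  m.+1%:R * (q - m%:R) * (q - 1) ^+ m * wgap q m
    <= (q + 2) * (q - 1) * ((q - 1) ^+ m - (m%:R * q - 1)) ^+ 2.
Proof.
move=> q9 m_odd m3 mq; have [-> | m_ne3] := eqVneq m 3%N; first exact: wpoly_odd_ineq3.
have m5 : (5 <= m)%N by case: m m_odd m3 m_ne3 mq => [|[|[|[|[|]]]]].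
have : 5 <= m%:R :> int by rewrite (ler_nat _ 5).
move: mq; rewrite -[m.+1%:R]natr1 => mq k5.
apply: (@large_power_ineq q (m%:R + 1)).
- lia.
- lia.
- apply/andP; split; nia.
- apply/andP; split; nia.
- by rewrite wgap_ge0 ?natr1 ?wgap_le //; lia.
- have p8 : 8 <= q - 1 by lia.
  by have := expr_ge_sqr p8 m5; rewrite subrK -[m.+1%:R]natr1.
Qed.

Lemma wpoly_ratio_ineq (q : int) (m : nat) : 9 <= q -> (3 <= m)%N -> m.+1%:R <= q ->
  m.+1%:R * (q - m%:R) * (wpoly q m * wpoly q m.+2)
    <= (q + 1 - m%:R) * m.+2%:R * wpoly q m.+1 ^+ 2.
Proof.
move=> q9 m3 mq; set K := m.+1%:R * (q - m%:R).
have K0 : 0 <= K by apply: mulr_ge0 => //; move: mq; rewrite -natr1; lia.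
have -> : (q + 1 - m%:R) * m.+2%:R = K + (q + 2) by rewrite /K -!natr1; ring.
have gap := wpoly_sqr_sub q m; rewrite -signr_odd in gap.
have T0 : 0 <= (q - 1) ^+ m.+1 * wgap q m.
  by rewrite mulr_ge0 ?exprn_ge0 ?wgap_ge0 //; lia.
have y0 : 0 <= wpoly q m.+1 ^+ 2 by apply: sqr_ge0.
have Pq0 : 0 <= (q - 1) ^+ 2 * q ^+ 2 by rewrite mulr_ge0 ?sqr_ge0.
have [m_odd|m_even] := boolP (odd m); last first.
  rewrite (negbTE m_even) expr0 in gap.
  have : wpoly q m * wpoly q m.+2 <= wpoly q m.+1 ^+ 2 by lia.
  move=> /(ler_wpM2l K0); lia.
rewrite m_odd expr1 in gap.
have key : K * ((q - 1) ^+ m.+1 * wgap q m) <= (q + 2) * wpoly q m.+1 ^+ 2.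
  have := wpoly_odd_ineq q9 m_odd m3 mq.
  rewrite wpoly_odd // [(q - 1) ^+ m.+1]exprS /K.
  have : 0 <= q - 1 by lia.
  move: (q - 1) ((q - 1) ^+ m) => P X P0 key.
  have -> : m.+1%:R * (q - m%:R) * (P * X * wgap q m)
    = P * (m.+1%:R * (q - m%:R) * X * wgap q m) by ring.
  have -> : (q + 2) * (P * (X - (m%:R * q - 1))) ^+ 2
    = P * ((q + 2) * P * (X - (m%:R * q - 1)) ^+ 2) by ring.
  exact: ler_wpM2l.
have : wpoly q m * wpoly q m.+2 <= wpoly q m.+1 ^+ 2 + (q - 1) ^+ m.+1 * wgap q m by lia.
move=> /(ler_wpM2l K0); lia.
Qed.

Section WeightDistribution.
Variables (Q : nat) (A : nat -> nat).
Local Notation q := (Q%:R : int).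
Hypothesis A_formula : forall w, q ^+ 2 * (A w)%:R = 'C(Q.+1, w)%:R * wpoly q w.
Hypothesis Q_ge9 : (9 <= Q)%N.

Let q2_gt0 : 0 < q ^+ 2. Proof. by rewrite exprn_gt0 // ltr0n; lia. Qed.

Lemma wdist_eq_mul w k : wpoly q w = k%:R * q ^+ 2 -> A w = ('C(Q.+1, w) * k)%N.
Proof.
move=> wk; have := A_formula w; rewrite wk mulrA [_ * q ^+ 2]mulrC -natrM.
by move/(mulfI (lt0r_neq0 q2_gt0))/eqP; rewrite eqr_nat => /eqP.
Qed.

Lemma wdist0 : A 0 = 1%N.
Proof. by rewrite (@wdist_eq_mul 0 1) ?bin0 // /wpoly; ring. Qed.

Lemma wdist1 : A 1 = 0%N.
Proof. by rewrite (@wdist_eq_mul 1 0) ?muln0 // /wpoly; ring. Qed.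

Lemma wdist2 : A 2 = 0%N.
Proof. by rewrite (@wdist_eq_mul 2 0) ?muln0 // /wpoly; ring. Qed.

Lemma wdist4_le_sqr : (A 4 <= A 3 ^ 2)%N.
Proof.
have A3 : (A 3)%:R = 'C(Q.+1, 3)%:R * (q - 1) :> int.
  have Q1 : (Q.-1)%:R = q - 1 by rewrite -subn1 natrB //; lia.
  by rewrite (@wdist_eq_mul 3 Q.-1) ?natrM Q1 // /wpoly; ring.
rewrite -(ler_nat int) natrX -(ler_pM2l q2_gt0) A_formula A3.
have C43 : 'C(Q.+1, 4)%:R <= 'C(Q.+1, 3)%:R ^+ 2 :> int by rewrite -natrX ler_nat bin4_le_sqr.
have w4_le : wpoly q 4 <= (q - 1) ^+ 2 * q ^+ 2.
  rewrite /wpoly; have : 9 <= q by rewrite (ler_nat _ 9).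
  move: q => x x9; have : (x - 1) ^+ 2 <= x ^+ 2 by nia.
  nia.
have -> : q ^+ 2 * ('C(Q.+1, 3)%:R * (q - 1)) ^+ 2
  = 'C(Q.+1, 3)%:R ^+ 2 * ((q - 1) ^+ 2 * q ^+ 2) by ring.
by apply: ler_pM => //; apply/ltW/wpoly_gt0; rewrite ?(ler_nat _ 4); lia.
Qed.

Lemma wdist_gt0 w : (3 <= w <= Q.+1)%N -> (0 < A w)%N.
Proof.
case/andP=> w3 wQ; rewrite -(ltr_nat int) -(pmulr_rgt0 _ q2_gt0) A_formula.
by rewrite mulr_gt0 ?wpoly_gt0 ?ltr0n ?bin_gt0 //; lia.
Qed.

Lemma wdist_log_concave m : (3 <= m)%N -> (m.+1 <= Q)%N -> (A m * A m.+2 <= A m.+1 ^ 2)%N.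
Proof.
move=> m3 mQ; set C := fun k => ('C(Q.+1, k)%:R : int).
set D := (q + 1 - m%:R) * m.+2%:R; set K := m.+1%:R * (q - m%:R).
have bin : C m * C m.+2 * D = C m.+1 ^+ 2 * K.
  move/eqP: (mul_bin_sqr Q.+1 m); rewrite subSS -(eqr_nat int) => /eqP.
  by rewrite !natrM !natrB -1?[Q.+1%:R]natr1 /C ?expr2; [move=> -> | lia | lia].
have D_gt0 : 0 < D.
  by rewrite mulr_gt0 ?ltr0n //; move: mQ; rewrite -(ler_nat int) -natr1; lia.
rewrite -(ler_nat int) natrM natrX -(ler_pM2r (mulr_gt0 (mulr_gt0 q2_gt0 q2_gt0) D_gt0)).
have -> : (A m)%:R * (A m.+2)%:R * (q ^+ 2 * q ^+ 2 * D)
    = (q ^+ 2 * (A m)%:R) * (q ^+ 2 * (A m.+2)%:R) * D by ring.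
have -> : (A m.+1)%:R ^+ 2 * (q ^+ 2 * q ^+ 2 * D) = (q ^+ 2 * (A m.+1)%:R) ^+ 2 * D by ring.
rewrite !A_formula -/(C _) -/(C m.+2) -/(C m.+1).
have -> : C m * wpoly q m * (C m.+2 * wpoly q m.+2) * D
    = C m.+1 ^+ 2 * (K * (wpoly q m * wpoly q m.+2)).
  by transitivity (C m * C m.+2 * D * (wpoly q m * wpoly q m.+2)); [ring | rewrite bin; ring].
have -> : (C m.+1 * wpoly q m.+1) ^+ 2 * D = C m.+1 ^+ 2 * (D * wpoly q m.+1 ^+ 2) by ring.
by rewrite ler_wpM2l ?sqr_ge0 // wpoly_ratio_ineq // ?ler_nat; lia.
Qed.

End WeightDistribution.

Lemma log_concave_cons_iota (x : nat) (f : nat -> nat) (a k : nat) :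
  (x * f a.+1 <= f a ^ 2)%N ->
  (forall m, (a <= m)%N -> (m.+2 < a + k)%N -> (f m * f m.+2 <= f m.+1 ^ 2)%N) ->
  log_concave_seq (x :: [seq f w | w <- iota a k]).
Proof.
move=> head_ineq tail_ineq; rewrite /log_concave_seq /= size_map size_iota.
case=> [//|[_ k2 | i _ ik]] /=.
  have k0 : (0 < k)%N by lia.
  by rewrite !(nth_map 0%N) ?size_iota // !(nth_iota 0%N a) // addn1 addn0.
have [k1 k2 k3] : [/\ (i < k)%N, (i.+1 < k)%N & (i.+2 < k)%N] by split; lia.
rewrite !(nth_map 0%N) ?size_iota // !(nth_iota 0%N a) // !addnS.
by apply: tail_ineq; rewrite ?leq_addr //; lia.
Qed.

Lemma nz_wdist_eq (F : finFieldType) (m n : nat) (H : 'M[F]_(m, n)) : (2 <= n)%N ->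
  wdist H 0 = 1%N -> wdist H 1 = 0%N -> wdist H 2 = 0%N ->
  (forall w, (3 <= w <= n)%N -> (0 < wdist H w)%N) ->
  nz_wdist H = 1%N :: [seq wdist H w | w <- iota 3 n.-2].
Proof.
move=> n2 A0 A1 A2 A_gt0; rewrite /nz_wdist (_ : n.+1 = n.-2.+3); last by lia.
rewrite /= A0 A1 A2 /=; congr (_ :: _); apply/all_filterP/allP => _ /mapP[w + ->].
by rewrite mem_iota -lt0n => /andP[w3 wn]; rewrite A_gt0 // w3 /=; lia.
Qed.

Theorem mainTheorem8 (F : finFieldType) (H : 'M[F]_(2, #|F|.+1)) :
  (9 <= #|F|)%N -> hamming_pcm H -> code_log_concave H.
Proof.
move=> F9 pcm; have A_formula := hamming_pcm_wdist pcm.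
rewrite /code_log_concave (nz_wdist_eq _ (wdist0 A_formula F9) (wdist1 A_formula F9)
  (wdist2 A_formula F9) (wdist_gt0 A_formula F9)); last by lia.
apply: log_concave_cons_iota => [|m m3 mF]; first by rewrite mul1n (wdist4_le_sqr A_formula F9).
by apply: (wdist_log_concave A_formula F9); lia.
Qed.
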